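(* For every $\beta>0$, the origin is the unique equilibrium of the ODE $\dot x=f(x)$ on $\mathbb R^n\times\mathbb R^n$, $$f(x_1,x_2)=\begin{bmatrix}-Dx_1+\gamma DP\big(M(x_2+Q^* )-M(Q^* )\big)\\ \beta Dx_1-\beta Dx_2\end{bmatrix},$$ and every solution converges to the origin as $t\to\infty$. Equivalently, for the ODE $\dot Q^A=DR+\gamma DPM(Q^B)-DQ^A$, $\dot Q^B=\beta D(Q^A-Q^B)$, every solution satisfies $(Q^A(t),Q^B(t))\to(Q^*,Q^* )$.
   Context: Finite MDP with states $\mathcal S$, actions $\mathcal A$, kernel $P$, expected reward vector $R\in\mathbb R^n$, discount $\gamma\in[0,1)$; $n=|\mathcal S||\mathcal A|$. $D$ is the diagonal matrix of a probability distribution $d$ on $\mathcal S\times\mathcal A$ with $d(s,a)>0$; $P$ is the $n\times|\mathcal S|$ matrix with row $(s,a)$ equal to $P(\cdot\mid s,a)$; $M(Q)(s)=\max_aQ(s,a)$; $Q^*=R+\gamma PM(Q^* )$ is the optimal Q-function. *)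

From HB Require Import structures.
From mathcomp Require Import all_boot all_order all_algebra.
From mathcomp Require Import all_classical all_reals all_analysis.
Set Implicit Arguments. Unset Strict Implicit. Unset Printing Implicit Defensive.
Import Order.TTheory GRing.Theory Num.Theory.
Import numFieldNormedType.Exports.
Local Open Scope ring_scope.

Section MDP.
Variables (R : realType) (S A : finType).

(* M(Q)(s) = max_a Q(s,a); a0 is any action (A nonempty), used only as the
   seed of the iterated max, so the value does not depend on a0. *)
Definition Mmax (a0 : A) (Q : S * A -> R) (s : S) : R :=
  \big[Num.max/Q (s, a0)]_(a : A) Q (s, a).

Definition Papp (P : S * A -> S -> R) (V : S -> R) (i : S * A) : R :=
  \sum_(s' : S) P i s' * V s'.

(* the vector field f(x1,x2) of the paper (D = diag d) *)
Definition f1 (a0 : A) (d : S * A -> R) (P : S * A -> S -> R) (gamma : R)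
  (Qs : S * A -> R) (x1 x2 : S * A -> R) (i : S * A) : R :=
  - (d i * x1 i) +
  gamma * d i * Papp P (fun s => Mmax a0 (fun j => x2 j + Qs j) s - Mmax a0 Qs s) i.

Definition f2 (d : S * A -> R) (beta : R) (x1 x2 : S * A -> R) (i : S * A) : R :=
  beta * d i * x1 i - beta * d i * x2 i.

Definition gA (a0 : A) (d : S * A -> R) (P : S * A -> S -> R) (Rw : S * A -> R)
  (gamma : R) (QA QB : S * A -> R) (i : S * A) : R :=
  d i * Rw i + gamma * d i * Papp P (Mmax a0 QB) i - d i * QA i.

Definition gB (d : S * A -> R) (beta : R) (QA QB : S * A -> R) (i : S * A) : R :=
  beta * d i * (QA i - QB i).

End MDP.

From HB Require Import structures.
From mathcomp Require Import all_boot all_order all_algebra.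
From mathcomp Require Import all_classical all_reals all_analysis.
From mathcomp Require Import lra ring.
Set Implicit Arguments. Unset Strict Implicit.
Import Order.TTheory GRing.Theory Num.Theory.
Import numFieldNormedType.Exports.
Local Open Scope classical_set_scope. Local Open Scope ring_scope.

(* Take c = (1 + gamma) / 2, so that gamma < c < 1, and the weighted sup norm
   V(x) = max (|x1|_oo, c |x2|_oo).  Since M is 1-Lipschitz for the sup norm and
   P is stochastic, at any index where x1 or c x2 attains +-V the vector field
   pushes that coordinate towards 0 at rate at least
   d_min * min (1 - gamma / c, beta (1 - c)) * V.  Comparing the coordinates
   with suitable barriers then drives V below any eps in finite time.  An
   equilibrium is a constant solution, hence 0, and (QA - Qs, QB - Qs) solves
   xdot = f(x) because Qs is the fixed point of the Bellman equation. *)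

Lemma is_derive_continuous (R : realType) (h : R -> R) (s l : R) :
  is_derive s (1 : R) h l -> h x @[x --> s] --> h s.
Proof. by move=> [dh _]; apply/differentiable_continuous/derivable1_diffP. Qed.

Lemma is_derive_lt0_left (R : realType) (h : R -> R) (s l : R) :
  is_derive s (1 : R) h l -> l < 0 ->
  exists2 del, 0 < del & forall t, s - del < t -> t < s -> h s < h t.
Proof.
move=> [dh dv] l0.
have : (fun e : R => e^-1 *: ((h \o shift s) (e *: 1) - h s)) @ 0^' --> l.
  by rewrite -dv; exact: dh.
move/cvgrPdist_lt => /(_ (- l)); rewrite oppr_gt0 => /(_ l0).
move=> /nbhs_ballP[del /= del0 Hd]; exists del => // t h1 h2.
have ts0 : t - s < 0 by rewrite subr_lt0.
have : ball (0 : R) del (t - s).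
  by rewrite /ball /= sub0r normrN ltr0_norm //; lra.
move=> /Hd /(_ (ltr0_neq0 ts0)); rewrite ltr_norml => /andP[+ _].
rewrite -[(t - s)%:A]/((t - s) * 1) mulr1 subrK opprK /GRing.scale /= => Hq.
have : (t - s)^-1 * (h t - h s) < 0 by lra.
by rewrite nmulr_rlt0 ?invr_lt0 // subr_gt0.
Qed.

Lemma is_derive_affine (R : realType) (a m t : R) :
  is_derive t (1 : R) (fun u => a + m * u) m.
Proof.
have := is_deriveD (is_derive_cst a t (1 : R)) (is_deriveZ m (is_derive_id t (1 : R))).
by rewrite add0r /= [m%:A]mulr1.
Qed.

Section Comparison.
Variables (R : realType) (I : finType) (u u' : I -> R -> R).
Hypothesis du : forall k (t : R), 0 < t -> is_derive t (1 : R) (u k) (u' k t).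

Section Barrier.
Variables (b b' : R -> R).
Hypothesis db : forall t : R, 0 < t -> is_derive t (1 : R) b (b' t).

Lemma first_touch t0 t2 k2 : 0 < t0 -> (forall k, u k t0 < b t0) ->
  t0 <= t2 -> b t2 <= u k2 t2 ->
  exists s, [/\ t0 < s, s <= t2, forall j, u j s <= b s, exists k, u k s = b s &
    forall t, t0 <= t -> t < s -> forall j, u j t < b t].
Proof.
move=> t00 init t02 bad.
set E := [set t | t0 <= t /\ t <= t2 /\ exists k, b t <= u k t].
have Elb : has_lbound E by exists t0 => t [].
have Ene : E !=set0 by exists t2; split => //; split => //; exists k2.
set s := inf E.
have t0s : t0 <= s by apply: lb_le_inf => // t [].
have st2 : s <= t2 by apply: ge_inf => //; split => //; split => //; exists k2.
have s0 : 0 < s by apply: lt_le_trans t0s.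
have before : forall t, t0 <= t -> t < s -> forall k, u k t < b t.
  move=> t h1 h2 k; rewrite ltNge; apply/negP => hk.
  have : s <= t by apply: ge_inf => //; split => //; split; [lra|exists k].
  lra.
have gap_cont k : (fun x => u k x - b x) x @[x --> s] --> (u k s - b s).
  exact: is_derive_continuous (is_deriveB (du k s0) (db s0)).
have below j : u j s <= b s.
  rewrite leNgt; apply/negP => hj.
  have : \forall t \near s, 0 < u j t - b t by apply: (cvgr_gt _ (gap_cont j)); lra.
  move=> /nbhs_ballP[del /= del0 Hd].
  have [ts|st] := leP t0 (s - del / 2).
    have : 0 < u j (s - del / 2) - b (s - del / 2).
      by apply: Hd; rewrite /ball /= opprB addrC subrK gtr0_norm ?divr_gt0 //; lra.
    by have := before (s - del / 2) ts ltac:(lra) j; lra.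
  have : 0 < u j t0 - b t0 by apply: Hd; rewrite /ball /= ger0_norm ?subr_ge0 //; lra.
  by have := init j; lra.
have touch : exists k, b s <= u k s.
  apply/not_existsP => /= nk.
  have : \forall t \near s, forall k, u k t - b t < 0.
    apply: (@filter_forall R I (fun k t => u k t - b t < 0) (nbhs s) _) => k.
    have : u k s - b s < 0 by rewrite subr_lt0 ltNge; apply/negP; apply: nk.
    exact: cvgr_lt (gap_cont k) _.
  move=> /nbhs_ballP[del /= del0 Hd].
  have [e Ee es] := inf_adherent del0 (conj Ene Elb).
  have se : s <= e by apply: ge_inf.
  have := Hd e; rewrite /ball /= ler0_norm ?subr_le0 // opprB => /(_ ltac:(lra)).
  by case: Ee => _ [_ [k hk]] /(_ k); lra.
have [k hk] := touch; have ek : u k s = b s by apply/le_anti; rewrite hk below.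
exists s; split => //; last by exists k.
by rewrite lt_neqAle t0s andbT; apply/eqP => et; have := init k; rewrite et ek ltxx.
Qed.

Lemma lt_barrier t0 t1 : 0 < t0 -> (forall k, u k t0 < b t0) ->
  (forall t k, t0 < t -> t <= t1 -> (forall j, u j t <= b t) -> u k t = b t ->
     u' k t < b' t) ->
  forall t k, t0 <= t -> t <= t1 -> u k t < b t.
Proof.
move=> t00 init cross t2 k2 t02 t21; rewrite ltNge; apply/negP => bad.
have [s [t0s st2 below [k ek] before]] := first_touch t00 init t02 bad.
have s0 : 0 < s by apply: lt_trans t0s.
have [del del0 rise] := is_derive_lt0_left (is_deriveB (du k s0) (db s0))
  ltac:(by rewrite subr_lt0 cross // (le_trans st2 t21)).
set t := Num.max t0 (s - del / 2).
have ts : t < s by rewrite gt_max t0s; lra.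
have := rise t ltac:(rewrite lt_max; apply/orP; right; lra) ts; rewrite !fctE.
by have := before t ltac:(by rewrite le_max lexx) ts k; lra.
Qed.

End Barrier.

Lemma eventually_lt_of_contact (kap : R) : 0 < kap ->
  (forall t k B, 0 < t -> (forall j, u j t <= B) -> u k t = B -> u' k t <= - (kap * B)) ->
  forall eps, 0 < eps -> \forall t \near +oo, forall k, u k t < eps.
Proof.
move=> kap0 contact eps eps0.
pose K := \sum_k `|u k 1|.
have uK k : u k 1 <= K.
  by apply: le_trans (ler_norm _) _; rewrite /K (bigD1 k) //= lerDl sumr_ge0.
pose alpha := kap * eps / 2.
have alpha0 : 0 < alpha by rewrite divr_gt0 // mulr_gt0.
pose T := 1 + K / alpha.
have T1 : 1 <= T by rewrite lerDl divr_ge0 ?sumr_ge0 // ltW.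
(* First the line from K + eps at time 1 down to eps at time T, then the constant eps. *)
have reach k : u k T < eps.
  have -> : eps = (K + eps + alpha) + (- alpha) * T.
    by rewrite /T; field; rewrite gt_eqF.
  apply: (@lt_barrier (fun t => (K + eps + alpha) + (- alpha) * t) (fun=> - alpha) _ 1 T).
  all: rewrite //.
  - by move=> t _; apply: is_derive_affine.
  - by move=> k'; have := uK k'; lra.
  - move=> t k' t1 tT below ek; have := contact t k' _ ltac:(lra) below ek.
    have : alpha * (t - 1) <= alpha * (T - 1) by rewrite ler_pM2l //; lra.
    have -> : alpha * (T - 1) = K by rewrite /T; field; rewrite gt_eqF.
    have : 0 < kap * eps by rewrite mulr_gt0.
    rewrite /alpha; nra.
exists T; split; first exact: num_real.
move=> t Tt k; apply: (@lt_barrier (fun=> eps) (fun=> 0) _ T t) => //.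
- by apply: lt_le_trans T1.
- move=> t' k' Tt' _ below ek; have := contact t' k' _ ltac:(lra) below ek.
  have : 0 < kap * eps by rewrite mulr_gt0.
  lra.
- exact: ltW.
Qed.

End Comparison.

Section MaxOperator.
Variables (R : realType) (S A : finType) (a0 : A).

Lemma le_Mmax (Q : S * A -> R) s a : Q (s, a) <= Mmax a0 Q s.
Proof. exact: le_bigmax. Qed.

Lemma Mmax_le (Q : S * A -> R) s C : (forall a, Q (s, a) <= C) -> Mmax a0 Q s <= C.
Proof. by move=> QC; apply: bigmax_le. Qed.

Lemma Mmax_shift_le (x Q : S * A -> R) B s :
  (forall j, `|x j| <= B) -> `|Mmax a0 (fun j => x j + Q j) s - Mmax a0 Q s| <= B.
Proof.
move=> xB; have [xl xu] : (forall j, - B <= x j) /\ (forall j, x j <= B).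
  by split=> j; have := xB j; rewrite ler_norml => /andP[].
have up : Mmax a0 (fun j => x j + Q j) s <= Mmax a0 Q s + B.
  by apply: Mmax_le => a; have := le_Mmax Q s a; have := xu (s, a); lra.
have down : Mmax a0 Q s <= Mmax a0 (fun j => x j + Q j) s + B.
  apply: Mmax_le => a; have := le_Mmax (fun j => x j + Q j) s a.
  by have := xl (s, a); rewrite /=; lra.
by rewrite ler_norml; apply/andP; split; lra.
Qed.

End MaxOperator.

Lemma PappB (R : realType) (S A : finType) (P : S * A -> S -> R) (y z : S -> R) i :
  Papp P (fun s => y s - z s) i = Papp P y i - Papp P z i.
Proof. by rewrite /Papp -sumrB; apply: eq_bigr => s _; rewrite mulrBr. Qed.

Lemma Papp_norm_le (R : realType) (S A : finType) (P : S * A -> S -> R) (y : S -> R) B i :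
  (forall s', 0 <= P i s') -> \sum_(s' : S) P i s' = 1 ->
  (forall s, `|y s| <= B) -> `|Papp P y i| <= B.
Proof.
move=> P0 P1 yB; apply: le_trans (ler_norm_sum _ _ _) _.
rewrite -[B]mul1r -P1 big_distrl /=; apply: ler_sum => s' _.
by rewrite normrM ger0_norm // ler_wpM2l.
Qed.

Lemma ler_norm_signs (R : realType) (y B : R) :
  (forall b : bool, (-1) ^+ b * y <= B) -> `|y| <= B.
Proof.
by move=> yB; rewrite ler_norml -lerNl -mulN1r (yB true) -[y]mul1r (yB false).
Qed.

Lemma ltr_norm_signs (R : realType) (y B : R) :
  (forall b : bool, (-1) ^+ b * y < B) -> `|y| < B.
Proof.
by move=> yB; rewrite ltr_norml -ltrNl -mulN1r (yB true) -[y]mul1r (yB false).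
Qed.

(* The maximum over p of these coordinates is max (|x1|_oo, c |x2|_oo). *)
Definition wnorm_coord (R : realType) (I : Type) (c : R) (x1 x2 : I -> R)
    (p : I * bool * bool) : R :=
  (-1) ^+ p.2 * (if p.1.2 then x1 p.1.1 else c * x2 p.1.1).

Lemma wnorm_coord_le (R : realType) (I : Type) (c : R) (x1 x2 : I -> R) B :
  0 <= c -> (forall p, wnorm_coord c x1 x2 p <= B) ->
  (forall j, `|x1 j| <= B) /\ (forall j, c * `|x2 j| <= B).
Proof.
move=> c0 xB; split=> j; last rewrite -[c]ger0_norm // -normrM.
  by apply: ler_norm_signs => b; exact: (xB (j, true, b)).
by apply: ler_norm_signs => b; exact: (xB (j, false, b)).
Qed.

Lemma wnorm_coord_lt (R : realType) (I : Type) (c : R) (x1 x2 : I -> R) B :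
  0 <= c -> (forall p, wnorm_coord c x1 x2 p < B) ->
  (forall j, `|x1 j| < B) /\ (forall j, c * `|x2 j| < B).
Proof.
move=> c0 xB; split=> j; last rewrite -[c]ger0_norm // -normrM.
  by apply: ltr_norm_signs => b; exact: (xB (j, true, b)).
by apply: ltr_norm_signs => b; exact: (xB (j, false, b)).
Qed.

Lemma is_derive_wnorm_coord (R : realType) (I : Type) (c : R)
    (x1 x2 : R -> I -> R) (x1' x2' : I -> R) t p :
  (forall j, is_derive t (1 : R) (fun u => x1 u j) (x1' j)) ->
  (forall j, is_derive t (1 : R) (fun u => x2 u j) (x2' j)) ->
  is_derive t (1 : R) (fun u => wnorm_coord c (x1 u) (x2 u) p) (wnorm_coord c x1' x2' p).
Proof. by move=> dx1 dx2; rewrite /wnorm_coord; case: p.1.2; apply: is_deriveZ. Qed.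

Section Dynamics.
Variables (R : realType) (S A : finType) (a0 : A) (P : S * A -> S -> R).
Variables (gamma beta : R) (d Qs : S * A -> R).
Hypotheses (P_ge0 : forall i s', 0 <= P i s') (P_sum1 : forall i, \sum_(s' : S) P i s' = 1).
Hypotheses (gamma_ge0 : 0 <= gamma) (gamma_lt1 : gamma < 1).
Hypotheses (d_gt0 : forall i, 0 < d i) (beta_gt0 : 0 < beta).

Lemma f1_contact (s : R) x1 x2 B1 B2 i : `|s| = 1 ->
  (forall j, `|x2 j| <= B2) -> s * x1 i = B1 ->
  s * f1 a0 d P gamma Qs x1 x2 i <= - (d i * B1) + gamma * d i * B2.
Proof.
move=> s1 x2B sx1; rewrite /f1; set g := Papp P _ i.
have gB : `|g| <= B2 by apply: Papp_norm_le => // s'; apply: Mmax_shift_le.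
have sgB : s * g <= B2 by apply: le_trans (ler_norm _) _; rewrite normrM s1 mul1r.
have gd0 : 0 <= gamma * d i by rewrite mulr_ge0 // ltW.
have : gamma * d i * (s * g) <= gamma * d i * B2 by rewrite ler_wpM2l.
have -> : s * (- (d i * x1 i) + gamma * d i * g) =
  - (d i * (s * x1 i)) + gamma * d i * (s * g) by ring.
by rewrite sx1; lra.
Qed.

Lemma f2_contact (s : R) x1 x2 B1 B2 i : `|s| = 1 ->
  `|x1 i| <= B1 -> s * x2 i = B2 ->
  s * f2 d beta x1 x2 i <= beta * d i * (B1 - B2).
Proof.
move=> s1 x1B sx2; have bd0 : 0 <= beta * d i by rewrite mulr_ge0 // ltW.
have sx1B : s * x1 i <= B1 by apply: le_trans (ler_norm _) _; rewrite normrM s1 mul1r.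
have -> : s * f2 d beta x1 x2 i = beta * d i * (s * x1 i - s * x2 i) by rewrite /f2; ring.
by rewrite sx2 ler_wpM2l // lerD2r.
Qed.

Lemma wnorm_coord_contact (c B : R) x1 x2 p : gamma < c -> c < 1 ->
  (forall q, wnorm_coord c x1 x2 q <= B) -> wnorm_coord c x1 x2 p = B ->
  wnorm_coord c (f1 a0 d P gamma Qs x1 x2) (f2 d beta x1 x2) p <=
    - (d p.1.1 * Num.min (1 - gamma / c) (beta * (1 - c)) * B).
Proof.
move=> gc c1 xB; have c0 : 0 < c by apply: le_lt_trans gc.
have [x1B x2B] := wnorm_coord_le (ltW c0) xB.
case: p => -[i []] b; rewrite /wnorm_coord /=; set s := (-1) ^+ b => sxB.
all: have s1 : `|s| = 1 by rewrite normr_sign.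
all: have B0 : 0 <= B by apply: le_trans (x1B i).
all: have di := d_gt0 i.
- apply: le_trans (@f1_contact s x1 x2 B (B / c) i s1 _ sxB) _.
    by move=> j; rewrite ler_pdivlMr // mulrC.
  have -> : - (d i * B) + gamma * d i * (B / c) = - (d i * (1 - gamma / c) * B) by ring.
  rewrite lerN2; apply: ler_wpM2r => //; apply: ler_wpM2l; first exact: ltW.
  by rewrite ge_min lexx.
- have sx2 : s * x2 i = B / c by rewrite -sxB; field; rewrite gt_eqF.
  apply: le_trans (_ : c * (beta * d i * (B - B / c)) <= _).
    by rewrite mulrCA ler_wpM2l ?(ltW c0) // f2_contact.
  have -> : c * (beta * d i * (B - B / c)) = - (d i * (beta * (1 - c)) * B).
    by field; rewrite gt_eqF.
  rewrite lerN2; apply: ler_wpM2r => //; apply: ler_wpM2l; first exact: ltW.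
  by rewrite ge_min lexx orbT.
Qed.

Definition solves_f (x1 x2 : R -> S * A -> R) :=
  forall t : R, 0 < t -> forall i,
    is_derive t (1 : R) (fun u => x1 u i) (f1 a0 d P gamma Qs (x1 t) (x2 t) i) /\
    is_derive t (1 : R) (fun u => x2 u i) (f2 d beta (x1 t) (x2 t) i).

Lemma solves_f_eventually_small x1 x2 : solves_f x1 x2 ->
  forall eps : R, 0 < eps -> \forall t \near +oo, forall i, `|x1 t i| < eps /\ `|x2 t i| < eps.
Proof.
move=> sol eps eps0; pose c : R := (1 + gamma) / 2.
have gc : gamma < c by rewrite /c; move: gamma_lt1; lra.
have c1 : c < 1 by rewrite /c; move: gamma_lt1; lra.
have c0 : 0 < c by apply: le_lt_trans gc.
pose dmin := \big[Num.min/1]_i d i.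
pose rate := Num.min (1 - gamma / c) (beta * (1 - c)).
have dmin0 : 0 < dmin by apply: lt_bigmin.
have rate0 : 0 < rate.
  by rewrite lt_min subr_gt0 ltr_pdivrMr // mul1r gc mulr_gt0 // subr_gt0.
have ev : \forall t \near +oo, forall p, wnorm_coord c (x1 t) (x2 t) p < c * eps.
  apply: (@eventually_lt_of_contact R _ (fun p t => wnorm_coord c (x1 t) (x2 t) p)
    (fun p t => wnorm_coord c (f1 a0 d P gamma Qs (x1 t) (x2 t)) (f2 d beta (x1 t) (x2 t)) p)
    _ (dmin * rate)).
  - by move=> p t t0; apply: is_derive_wnorm_coord => j; have [] := sol t t0 j.
  - exact: mulr_gt0.
  - move=> t p B _ /= below ep.
    apply: le_trans (wnorm_coord_contact gc c1 below ep) _.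
    have B0 : 0 <= B by apply: le_trans (proj1 (wnorm_coord_le (ltW c0) below) p.1.1).
    rewrite lerN2; apply: ler_wpM2r => //; apply: ler_wpM2r; first exact: ltW.
    exact: bigmin_le.
  - exact: mulr_gt0.
apply: filterS ev => t /(wnorm_coord_lt (ltW c0)) [x1_lt x2_lt] i; split.
  by apply: lt_le_trans (x1_lt i) _; rewrite ger_pMl // ltW.
by rewrite -(ltr_pM2l c0).
Qed.

Lemma equilibriumP x1 x2 :
  (forall i, f1 a0 d P gamma Qs x1 x2 i = 0 /\ f2 d beta x1 x2 i = 0) <->
  (forall i, x1 i = 0 /\ x2 i = 0).
Proof.
split=> [f0 | x0 i].
  have sol : solves_f (fun=> x1) (fun=> x2).
    by move=> t _ i; have [-> ->] := f0 i; split; apply: is_derive_cst.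
  have small (eps : R) : 0 < eps -> forall i, `|x1 i| < eps /\ `|x2 i| < eps.
    by move=> eps0; have [t] := filter_ex (solves_f_eventually_small sol eps0).
  move=> i; split; apply/eqP; rewrite -normr_le0 leNgt; apply/negP => /small /(_ i).
    by case; rewrite ltxx.
  by case=> _; rewrite ltxx.
rewrite /f1 /f2 !(proj1 (x0 i)) !(proj2 (x0 i)).
have : `|Papp P (fun s => Mmax a0 (fun j => x2 j + Qs j) s - Mmax a0 Qs s) i| <= 0.
  by apply: Papp_norm_le => // s; apply: Mmax_shift_le => j; rewrite (proj2 (x0 j)) normr0.
by rewrite normr_le0 => /eqP ->; split; rewrite ?mulr0 ?oppr0 ?add0r ?subrr.
Qed.

Lemma solves_f_shift (Rw : S * A -> R) (QA QB : R -> S * A -> R) :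
  (forall i, Qs i = Rw i + gamma * Papp P (Mmax a0 Qs) i) ->
  (forall t : R, 0 < t -> forall i,
    is_derive t (1 : R) (fun u => QA u i) (gA a0 d P Rw gamma (QA t) (QB t) i) /\
    is_derive t (1 : R) (fun u => QB u i) (gB d beta (QA t) (QB t) i)) ->
  solves_f (fun t j => QA t j - Qs j) (fun t j => QB t j - Qs j).
Proof.
move=> bellman sol t t0 i; have [dA dB] := sol t t0 i.
split.
  suff -> : f1 a0 d P gamma Qs (fun j => QA t j - Qs j) (fun j => QB t j - Qs j) i =
      gA a0 d P Rw gamma (QA t) (QB t) i - 0.
    exact: is_deriveB dA (is_derive_cst (Qs i) t 1).
  rewrite /f1; have -> : (fun j => QB t j - Qs j + Qs j) = QB t.
    by apply/funext => j; rewrite subrK.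
  by rewrite PappB (bellman i) /gA; ring.
suff -> : f2 d beta (fun j => QA t j - Qs j) (fun j => QB t j - Qs j) i =
    gB d beta (QA t) (QB t) i - 0.
  exact: is_deriveB dB (is_derive_cst (Qs i) t 1).
by rewrite /f2 /gB; ring.
Qed.

End Dynamics.

Theorem mainTheorem12 (R : realType) (S A : finType) (a0 : A)
  (P : S * A -> S -> R) (Rw : S * A -> R) (gamma : R) (d : S * A -> R)
  (Qs : S * A -> R) (beta : R) :
  (forall i s', 0 <= P i s') -> (forall i, \sum_(s' : S) P i s' = 1) ->
  0 <= gamma -> gamma < 1 ->
  (forall i, 0 < d i) -> \sum_(i : S * A) d i = 1 ->
  (forall i, Qs i = Rw i + gamma * Papp P (Mmax a0 Qs) i) ->
  0 < beta ->
  (* the origin is the unique equilibrium *)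
  (forall x1 x2 : S * A -> R,
      ((forall i, f1 a0 d P gamma Qs x1 x2 i = 0 /\ f2 d beta x1 x2 i = 0)
       <-> (forall i, x1 i = 0 /\ x2 i = 0)))
  /\
  (* every solution of xdot = f(x) converges to the origin *)
  (forall x1 x2 : R -> S * A -> R,
      (forall t : R, 0 < t -> forall i,
          is_derive t (1 : R) (fun u => x1 u i) (f1 a0 d P gamma Qs (x1 t) (x2 t) i) /\
          is_derive t (1 : R) (fun u => x2 u i) (f2 d beta (x1 t) (x2 t) i)) ->
      forall i, (x1 t i @[t --> +oo] --> 0) /\ (x2 t i @[t --> +oo] --> 0))
  /\
  (* equivalently: every solution of the Q^A/Q^B ODE converges to the pair (Qs, Qs) *)
  (forall QA QB : R -> S * A -> R,
      (forall t : R, 0 < t -> forall i,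
          is_derive t (1 : R) (fun u => QA u i) (gA a0 d P Rw gamma (QA t) (QB t) i) /\
          is_derive t (1 : R) (fun u => QB u i) (gB d beta (QA t) (QB t) i)) ->
      forall i, (QA t i @[t --> +oo] --> Qs i) /\ (QB t i @[t --> +oo] --> Qs i)).
Proof.
move=> P_ge0 P_sum1 gamma_ge0 gamma_lt1 d_gt0 _ bellman beta_gt0.
have small := solves_f_eventually_small (a0 := a0) (Qs := Qs)
  P_ge0 P_sum1 gamma_ge0 gamma_lt1 d_gt0 beta_gt0.
split; first exact: equilibriumP.
split=> [x1 x2 sol i | QA QB sol i].
  split; apply/cvgrPdist_lt => e e0; have := small _ _ sol e e0;
    by apply: filterS => t /(_ i) []; rewrite sub0r normrN.
have := solves_f_shift bellman sol => /small sol0.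
split; apply/cvgrPdist_lt => e e0; have := sol0 e e0;
  by apply: filterS => t /(_ i) [? ?]; rewrite distrC.
Qed.
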